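(* Let $N\ge1$, $n\ge1$, $\gamma>0$, and let channel gains $g_{S,k}>0$, $g_{k,D}>0$ ($k=1,\dots,N$) satisfy $g_{S,1}\le g_{S,2}\le\cdots\le g_{S,N}$. Put $C_{a,b}=C(g_{a,b}\gamma)$ and $V_{a,b}=V(g_{a,b}\gamma)$ with $C(\rho)=\tfrac12\log(1+\rho)$ and $V(\rho)=\frac{\rho}{2}\frac{2+\rho}{(1+\rho)^2}(\log e)^2$. Let $\varepsilon_d'\in(0,\tfrac12)$. For $x=(x_1[1],\dots,x_N[N])$ with all $x_k[k]>0$ define, for $1\le k\le m\le N$, $$x_m[k]=\sqrt{\tfrac{n}{V_{S,m}}}\,(C_{S,m}-C_{S,k})+\sqrt{\tfrac{V_{S,m}}{V_{S,k}}}\,x_k[k],\qquad x_D[k]=\sqrt{\tfrac{n}{V_{k,D}}}\,(C_{k,D}-C_{S,k})+\sqrt{\tfrac{V_{S,k}}{V_{k,D}}}\,x_k[k].$$ Consider the problem of minimizing $\sum_{k=1}^N\sqrt{V_{S,k}}\,x_k[k]$ over all $x$ with $x_k[k]>0$ for all $k$ subject to $$\sum_{k=1}^N\Big(\sum_{m=k}^N Q(x_m[k])+Q(x_D[k])\Big)\le\varepsilon_d'.$$ Then every optimal solution $x$ of this problem satisfies $$\sum_{k=1}^N\Big(\sum_{m=k}^N Q(x_m[k])+Q(x_D[k])\Big)=\varepsilon_d'.$$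
   Context: $Q(x)=\int_x^\infty\frac{1}{\sqrt{2\pi}}e^{-t^2/2}\,dt$ is the Gaussian tail function. $C$ is the capacity and $V$ the channel dispersion of a real AWGN channel with SNR $\rho$; $S$ is the source, $D$ the destination, relays are indexed $1,\dots,N$, $g_{a,b}$ is the channel gain of link $a\to b$, $\gamma$ the transmit SNR, and $n$ the blocklength. The variable $x_m[k]$ stands for $Q^{-1}$ of the error probability of relay $m$ (resp. $D$ for $x_D[k]$) decoding message $W_k$. *)

From Stdlib Require Import Reals Lra.
From Coquelicot Require Import Coquelicot.
Open Scope R_scope.

Definition Qfun (x : R) : R :=
  RInt_gen (fun t => / sqrt (2 * PI) * exp (- t ^ 2 / 2)) (at_point x) (Rbar_locally p_infty).

Definition log2 (x : R) : R := ln x / ln 2.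

Definition Cap (rho : R) : R := / 2 * log2 (1 + rho).
Definition Disp (rho : R) : R :=
  rho / 2 * ((2 + rho) / (1 + rho) ^ 2) * (log2 (exp 1)) ^ 2.

Section Problem.
(* gS k = g_{S,k}, gD k = g_{k,D}, relays indexed 1..N *)
Variables (N n : nat) (gamma : R) (gS gD : nat -> R).

Definition CS (k : nat) := Cap (gS k * gamma).
Definition VS (k : nat) := Disp (gS k * gamma).
Definition CD (k : nat) := Cap (gD k * gamma).
Definition VD (k : nat) := Disp (gD k * gamma).

(* x k stands for x_k[k]; xm x m k = x_m[k]; xDst x k = x_D[k]. *)
Definition xm (x : nat -> R) (m k : nat) : R :=
  sqrt (INR n / VS m) * (CS m - CS k) + sqrt (VS m / VS k) * x k.
Definition xDst (x : nat -> R) (k : nat) : R :=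
  sqrt (INR n / VD k) * (CD k - CS k) + sqrt (VS k / VD k) * x k.

Definition err_sum (x : nat -> R) : R :=
  sum_n_m (fun k => sum_n_m (fun m => Qfun (xm x m k)) k N + Qfun (xDst x k)) 1 N.

Definition objective (x : nat -> R) : R :=
  sum_n_m (fun k => sqrt (VS k) * x k) 1 N.

Definition feasible (eps : R) (x : nat -> R) : Prop :=
  (forall k, (1 <= k <= N)%nat -> 0 < x k) /\ err_sum x <= eps.

Definition optimal (eps : R) (x : nat -> R) : Prop :=
  feasible eps x /\ forall y, feasible eps y -> objective x <= objective y.
End Problem.

(* If the constraint were slack, lowering x_1[1] a little would keep it satisfied, since the
   error terms depend on x_1[1] only through affine maps with nonnegative slopes and Q is
   1-Lipschitz (its density is bounded by 1), while the objective would strictly decrease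
   because V_{S,1} > 0. *)
From Stdlib Require Import Reals Lra Lia.
From Coquelicot Require Import Coquelicot.
Open Scope R_scope.

Lemma exp_le_exp x y : x <= y -> exp x <= exp y.
Proof.
  intros [Hlt | ->]; [now left; apply exp_increasing | apply Rle_refl].
Qed.

Definition gauss_density (t : R) : R := / sqrt (2 * PI) * exp (- t ^ 2 / 2).

Lemma gauss_density_ge0 t : 0 <= gauss_density t.
Proof.
  unfold gauss_density. apply Rmult_le_pos; [| now left; apply exp_pos].
  left; apply Rinv_0_lt_compat, sqrt_lt_R0. pose proof PI_RGT_0; lra.
Qed.

Lemma gauss_density_le_exp t : gauss_density t <= exp (- t ^ 2 / 2).
Proof.
  unfold gauss_density.
  assert (Hsqrt : 1 <= sqrt (2 * PI)).
  { rewrite <- sqrt_1. apply sqrt_le_1_alt. pose proof PI2_3_2; lra. }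
  pose proof (exp_pos (- t ^ 2 / 2)).
  assert (/ sqrt (2 * PI) <= 1) by (rewrite <- Rinv_1; apply Rinv_le_contravar; lra).
  nra.
Qed.

Lemma gauss_density_le_1 t : gauss_density t <= 1.
Proof.
  eapply Rle_trans; [apply gauss_density_le_exp |].
  rewrite <- exp_0. apply exp_le_exp. nra.
Qed.

Lemma gauss_density_le_exp_linear t : gauss_density t <= exp (/ 2 - t).
Proof.
  eapply Rle_trans; [apply gauss_density_le_exp |].
  apply exp_le_exp. pose proof (pow2_ge_0 (t - 1)). nra.
Qed.

Lemma ex_RInt_gauss_density a b : ex_RInt gauss_density a b.
Proof.
  apply (ex_RInt_continuous (V := R_CompleteNormedModule)). intros t _.
  apply (ex_derive_continuous (V := R_NormedModule)). unfold gauss_density. auto_derive. easy.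
Qed.

Lemma RInt_gauss_density_ge0 a b : a <= b -> 0 <= RInt gauss_density a b.
Proof.
  intros Hab. apply RInt_ge_0; [easy | apply ex_RInt_gauss_density |].
  intros; apply gauss_density_ge0.
Qed.

Lemma RInt_gauss_density_le a b : a <= b -> RInt gauss_density a b <= exp (/ 2 - a).
Proof.
  intros Hab.
  assert (Hexp : is_RInt (fun t => exp (/ 2 - t)) a b (exp (/ 2 - a) - exp (/ 2 - b))).
  { replace (exp (/ 2 - a) - exp (/ 2 - b)) with (- exp (/ 2 - b) - - exp (/ 2 - a)) by ring.
    apply (is_RInt_derive (fun t => - exp (/ 2 - t))).
    - intros t _. auto_derive; [easy | unfold Rminus; ring].
    - intros t _. apply (ex_derive_continuous (fun t => exp (/ 2 - t))). auto_derive. easy. }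
  apply Rle_trans with (exp (/ 2 - a) - exp (/ 2 - b)).
  - rewrite <- (is_RInt_unique _ _ _ _ Hexp). apply RInt_le; [easy | .. ].
    + apply ex_RInt_gauss_density.
    + eexists; exact Hexp.
    + intros t _. apply gauss_density_le_exp_linear.
  - pose proof (exp_pos (/ 2 - b)). lra.
Qed.

Lemma Rabs_RInt_gauss_density_le M b c :
  M <= b -> M <= c -> Rabs (RInt gauss_density b c) <= exp (/ 2 - M).
Proof.
  assert (Hbound : forall b c, M <= b <= c -> Rabs (RInt gauss_density b c) <= exp (/ 2 - M)).
  { intros b' c' [HMb Hbc]. rewrite Rabs_pos_eq by now apply RInt_gauss_density_ge0.
    eapply Rle_trans; [now apply RInt_gauss_density_le |]. apply exp_le_exp. lra. }
  intros HMb HMc. destruct (Rle_or_lt b c).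
  - apply Hbound; lra.
  - rewrite <- (opp_RInt_swap (V := R_CompleteNormedModule)) by apply ex_RInt_gauss_density.
    rewrite Rabs_Ropp. apply Hbound; lra.
Qed.

(* Cauchy criterion: beyond M, every piece of the integral is at most exp (1/2 - M). *)
Lemma ex_lim_RInt_gauss_density a :
  exists l, filterlim (fun b => RInt gauss_density a b) (Rbar_locally p_infty) (locally l).
Proof.
  apply (filterlim_locally_cauchy (U := R_CompleteSpace)). intros eps.
  set (M := / 2 - ln (eps / 2)).
  exists (fun b => M <= b). split; [now exists M; intros; lra |].
  intros b c HMb HMc. change (Rabs (RInt gauss_density a c - RInt gauss_density a b) < eps).
  assert (Hsplit : RInt gauss_density a b + RInt gauss_density b c = RInt gauss_density a c)
    by (apply (RInt_Chasles (V := R_CompleteNormedModule)); apply ex_RInt_gauss_density).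
  rewrite <- Hsplit. replace (_ + _ - _) with (RInt gauss_density b c) by lra.
  eapply Rle_lt_trans; [now apply (Rabs_RInt_gauss_density_le M) |].
  unfold M. replace (/ 2 - (/ 2 - ln (eps / 2))) with (ln (eps / 2)) by ring.
  pose proof (cond_pos eps). rewrite exp_ln; lra.
Qed.

Lemma is_RInt_gen_Qfun a :
  is_RInt_gen gauss_density (at_point a) (Rbar_locally p_infty) (Qfun a).
Proof.
  destruct (ex_lim_RInt_gauss_density a) as [l Hl].
  assert (HQ : is_RInt_gen gauss_density (at_point a) (Rbar_locally p_infty) l).
  { intros P HP.
    apply (Filter_prod _ _ _ (fun u => u = a) (fun b => P (RInt gauss_density a b))).
    - reflexivity.
    - now apply Hl.
    - intros u b -> Hb. exists (RInt gauss_density a b). split; [| exact Hb].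
      apply (RInt_correct (V := R_CompleteNormedModule)), ex_RInt_gauss_density. }
  unfold Qfun. fold gauss_density. now rewrite (is_RInt_gen_unique _ _ HQ).
Qed.

Lemma Qfun_Chasles u v : Qfun u = RInt gauss_density u v + Qfun v.
Proof.
  assert (Huv : is_RInt_gen gauss_density (at_point u) (at_point v) (RInt gauss_density u v)).
  { apply is_RInt_gen_at_point, (RInt_correct (V := R_CompleteNormedModule)).
    apply ex_RInt_gauss_density. }
  unfold Qfun at 1. fold gauss_density.
  exact (is_RInt_gen_unique _ _ (is_RInt_gen_Chasles _ v _ _ Huv (is_RInt_gen_Qfun v))).
Qed.

Lemma Qfun_sub_le u d : 0 <= d -> Qfun (u - d) <= Qfun u + d.
Proof.
  intros Hd. rewrite (Qfun_Chasles (u - d) u).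
  assert (Hint : RInt gauss_density (u - d) u <= RInt (fun _ => 1) (u - d) u).
  { apply RInt_le; [lra | apply ex_RInt_gauss_density | apply ex_RInt_const |].
    intros; apply gauss_density_le_1. }
  rewrite RInt_const in Hint. unfold scal in Hint; simpl in Hint; unfold mult in Hint; simpl in Hint.
  lra.
Qed.

Lemma Disp_pos rho : 0 < rho -> 0 < Disp rho.
Proof.
  intros Hrho. unfold Disp.
  assert (Hlog : log2 (exp 1) <> 0).
  { unfold log2. rewrite ln_exp.
    assert (0 < ln 2) by (rewrite <- ln_1; apply ln_increasing; lra).
    apply Rgt_not_eq, Rdiv_lt_0_compat; lra. }
  apply Rmult_lt_0_compat; [apply Rmult_lt_0_compat |].
  - lra.
  - apply Rdiv_lt_0_compat; [lra | apply pow_lt; lra].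
  - now apply pow2_gt_0.
Qed.

Lemma sum_n_m_plus_mult_r (u v : nat -> R) (c : R) a b :
  sum_n_m (fun k => u k + v k * c) a b = sum_n_m u a b + sum_n_m v a b * c.
Proof.
  rewrite <- (sum_n_m_mult_r (K := R_Ring)).
  now rewrite <- (sum_n_m_plus (G := R_AbelianMonoid)).
Qed.

Section LowerFirst.
Variables (N n : nat) (gamma : R) (gS gD : nat -> R).
Hypothesis N_ge1 : (1 <= N)%nat.

Definition err_term (x : nat -> R) (k : nat) : R :=
  sum_n_m (fun m => Qfun (xm n gamma gS x m k)) k N + Qfun (xDst n gamma gS gD x k).

Definition err_slope : R :=
  sum_n_m (fun m => sqrt (VS gamma gS m / VS gamma gS 1)) 1 N + sqrt (VS gamma gS 1 / VD gamma gD 1).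

Definition lower_first (x : nat -> R) (d : R) (k : nat) : R :=
  if Nat.eqb k 1 then x k - d else x k.

Lemma lower_first_1 x d : lower_first x d 1 = x 1%nat - d.
Proof. reflexivity. Qed.

Lemma lower_first_ne1 x d k : k <> 1%nat -> lower_first x d k = x k.
Proof. intros Hk. unfold lower_first. now rewrite (proj2 (Nat.eqb_neq k 1) Hk). Qed.

Lemma err_term_lower_first_ne1 x d k : k <> 1%nat -> err_term (lower_first x d) k = err_term x k.
Proof. intros Hk. unfold err_term, xm, xDst. now rewrite lower_first_ne1. Qed.

Lemma err_term_lower_first_1 x d :
  0 <= d -> err_term (lower_first x d) 1 <= err_term x 1 + err_slope * d.
Proof.
  intros Hd. unfold err_term, err_slope.
  set (sD := sqrt (VS gamma gS 1 / VD gamma gD 1)).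
  set (s := fun m => sqrt (VS gamma gS m / VS gamma gS 1)).
  assert (Hrelays : sum_n_m (fun m => Qfun (xm n gamma gS (lower_first x d) m 1)) 1 N
            <= sum_n_m (fun m => Qfun (xm n gamma gS x m 1) + s m * d) 1 N).
  { apply sum_n_m_le. intros m.
    replace (xm n gamma gS (lower_first x d) m 1) with (xm n gamma gS x m 1 - s m * d)
      by (unfold xm, s; rewrite lower_first_1; ring).
    apply Qfun_sub_le, Rmult_le_pos; [apply sqrt_pos | easy]. }
  assert (Hdest : Qfun (xDst n gamma gS gD (lower_first x d) 1)
            <= Qfun (xDst n gamma gS gD x 1) + sD * d).
  { replace (xDst n gamma gS gD (lower_first x d) 1) with (xDst n gamma gS gD x 1 - sD * d)
      by (unfold xDst, sD; rewrite lower_first_1; ring).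
    apply Qfun_sub_le, Rmult_le_pos; [apply sqrt_pos | easy]. }
  rewrite sum_n_m_plus_mult_r in Hrelays. fold s. lra.
Qed.

Lemma err_sum_lower_first x d :
  0 <= d -> err_sum N n gamma gS gD (lower_first x d) <= err_sum N n gamma gS gD x + err_slope * d.
Proof.
  intros Hd. change (sum_n_m (err_term (lower_first x d)) 1 N <= sum_n_m (err_term x) 1 N + err_slope * d).
  rewrite !(sum_Sn_m _ 1 N) by lia.
  rewrite (sum_n_m_ext_loc (err_term (lower_first x d)) (err_term x))
    by (intros k Hk; apply err_term_lower_first_ne1; lia).
  unfold plus; simpl. pose proof (err_term_lower_first_1 x d Hd). lra.
Qed.

Lemma objective_lower_first x d :
  objective N gamma gS (lower_first x d) = objective N gamma gS x - sqrt (VS gamma gS 1) * d.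
Proof.
  unfold objective. rewrite !(sum_Sn_m _ 1 N) by lia.
  rewrite (sum_n_m_ext_loc (fun k => sqrt (VS gamma gS k) * lower_first x d k)
                           (fun k => sqrt (VS gamma gS k) * x k))
    by (intros k Hk; rewrite lower_first_ne1 by lia; reflexivity).
  rewrite lower_first_1. unfold plus; simpl. ring.
Qed.

Lemma feasible_lower_first eps x d :
  feasible N n gamma gS gD eps x -> 0 < d < x 1%nat ->
  err_sum N n gamma gS gD x + err_slope * d <= eps ->
  feasible N n gamma gS gD eps (lower_first x d).
Proof.
  intros [Hpos _] Hd Herr. split.
  - intros k Hk. destruct (Nat.eq_dec k 1) as [-> | Hk1].
    + rewrite lower_first_1. lra.
    + rewrite lower_first_ne1 by easy. now apply Hpos.
  - eapply Rle_trans; [apply err_sum_lower_first; lra | easy].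
Qed.

Lemma err_slope_ge0 : 0 <= err_slope.
Proof.
  unfold err_slope. apply Rplus_le_le_0_compat; [| apply sqrt_pos].
  apply Rle_trans with (sum_n_m (fun _ => 0) 1 N).
  - rewrite sum_n_m_const. lra.
  - apply sum_n_m_le. intros; apply sqrt_pos.
Qed.

End LowerFirst.

Lemma exists_small_step a L s :
  0 < a -> 0 <= L -> 0 < s -> exists d, 0 < d < a /\ L * d <= s.
Proof.
  intros Ha HL Hs.
  set (d := Rmin (a / 2) (s / (L + 1))).
  assert (Hd : 0 < d) by (apply Rmin_pos; [lra | apply Rdiv_lt_0_compat; lra]).
  assert (Hda : d <= a / 2) by apply Rmin_l.
  assert (Hds : d * (L + 1) <= s).
  { apply Rle_trans with (s / (L + 1) * (L + 1)).
    - apply Rmult_le_compat_r; [lra | apply Rmin_r].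
    - right. field. lra. }
  exists d. split; [lra | nra].
Qed.

Theorem lemma2 (N n : nat) (gamma : R) (gS gD : nat -> R) (eps : R) (x : nat -> R) :
  (1 <= N)%nat -> (1 <= n)%nat -> 0 < gamma ->
  (forall k, (1 <= k <= N)%nat -> 0 < gS k /\ 0 < gD k) ->
  (forall k, (1 <= k < N)%nat -> gS k <= gS (S k)) ->
  0 < eps < / 2 ->
  optimal N n gamma gS gD eps x ->
  err_sum N n gamma gS gD x = eps.
Proof.
  intros HN _ Hgamma Hgains _ _ [Hfeas Hopt].
  destruct (proj2 Hfeas) as [Hslack | Htight]; [exfalso | exact Htight].
  assert (Hx1 : 0 < x 1%nat) by (apply (proj1 Hfeas); lia).
  destruct (exists_small_step (x 1%nat) (err_slope N gamma gS gD) (eps - err_sum N n gamma gS gD x))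
    as [d [Hd Hstep]]; [easy | apply err_slope_ge0 | lra |].
  assert (HV1 : 0 < sqrt (VS gamma gS 1)).
  { apply sqrt_lt_R0, Disp_pos, Rmult_lt_0_compat; [apply Hgains; lia | easy]. }
  pose proof (Hopt _ (feasible_lower_first N n gamma gS gD HN eps x d Hfeas Hd ltac:(lra))) as Hle.
  rewrite objective_lower_first in Hle by easy. nra.
Qed.
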